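(* There exist five distinct points $p_1,\dots,p_5$ in the plane (not necessarily in general position) such that there is no family $K_1,\dots,K_5$ of pairwise intersecting compact convex sets in the plane with $o(K_iK_jK_k)=o(p_ip_jp_k)$ for all distinct $i,j,k\in\{1,\dots,5\}$.
   Context: For points $p,q,r$ in the plane, $o(pqr)\in\{+1,0,-1\}$ is $+1$ if $p,q,r$ form a counterclockwise triangle, $-1$ if clockwise, and $0$ if they are collinear. For three pairwise intersecting compact convex sets $A,B,C$ in the plane: if $A\cap B\cap C\neq\emptyset$ then $o(ABC)=0$; otherwise $o(ABC)=o(xyz)$ for any $x\in B\cap C$, $y\in A\cap C$, $z\in A\cap B$ (this orientation is known not to depend on the choice of $x,y,z$, and is nonzero). *)

From HB Require Import structures.
From mathcomp Require Import all_boot all_order all_algebra.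
From mathcomp Require Import all_classical all_reals topology normedtype.
Set Implicit Arguments. Unset Strict Implicit. Unset Printing Implicit Defensive.
Import Order.TTheory GRing.Theory Num.Theory.
Local Open Scope ring_scope.
Local Open Scope classical_set_scope.

Definition orient (R : realType) (p q r : R * R) : R :=
  Num.sg ((q.1 - p.1) * (r.2 - p.2) - (q.2 - p.2) * (r.1 - p.1)).

Definition convex_set2 (R : realType) (K : set (R * R)) : Prop :=
  forall x y, K x -> K y -> forall t : R, 0 <= t -> t <= 1 ->
    K (t * x.1 + (1 - t) * y.1, t * x.2 + (1 - t) * y.2).

Definition set_orient_is (R : realType) (A B C : set (R * R)) (s : R) : Prop :=
  ((A `&` B `&` C) !=set0 /\ s = 0) \/
  ((A `&` B `&` C) = set0 /\
   forall x y z, (B `&` C) x -> (A `&` C) y -> (A `&` B) z -> orient x y z = s).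

From HB Require Import structures.
From mathcomp Require Import all_boot all_order all_algebra.
From mathcomp Require Import all_classical all_reals topology normedtype.
From mathcomp Require Import ring lra.
Import Order.TTheory GRing.Theory Num.Theory.
Import numFieldNormedType.Exports.
Local Open Scope ring_scope.
Local Open Scope classical_set_scope.

(* Take p0 = (0,0), p1, p2 = (1,0), (-1,0) and p3, p4 = (0,1), (0,-1).  Since
   p0p1p2 and p0p3p4 are collinear, Helly's theorem on a line gives points
   a ∈ K0 ∩ K1 ∩ K2 and b ∈ K0 ∩ K3 ∩ K4, and for i ∈ {1,2}, j ∈ {3,4} the
   nonzero orientation o(K0 Ki Kj) puts Ki ∩ Kj strictly on a prescribed side
   of the line ab.  As K0 ⊇ [a, b] misses Ki ∩ Kj, for x ∈ Ki ∩ Kj the segment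
   from x to a point P ∈ Ki across ab must meet ab nearer to a than the
   segment from x to a point Q ∈ Kj across ab; this fixes the orientation of
   xPQ.  The four orientations so obtained for points of K1 ∩ K3, K1 ∩ K4,
   K2 ∩ K3, K2 ∩ K4 contradict the linear relation between the heights of
   four points above ab and the areas of their triangles. *)

Section Plane.
Context {R : realType}.
Implicit Types (a b d e u w p q x y z P Q : R * R) (s t : R).
Implicit Types (A B C K : set (R * R)).

Definition area p q (r : R * R) : R :=
  (q.1 - p.1) * (r.2 - p.2) - (q.2 - p.2) * (r.1 - p.1).

Lemma orientE p q (r : R * R) : orient p q r = Num.sg (area p q r).
Proof. by []. Qed.

Lemma area_rotate p q (r : R * R) : area p q r = area q r p.
Proof. by rewrite /area; ring. Qed.

Lemma orient_height a b x : orient x b a = - Num.sg (area a b x).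
Proof. by rewrite orientE -sgrN /area; congr Num.sg; ring. Qed.

(* Expansion of the vanishing determinant with rows (1, p.1, p.2, area a b p)
   for p = d, u, w, e, the last column being affine in the first three. *)
Lemma area_height_relation a b d u w e :
  area a b d * area e w u + area a b u * area w e d +
  area a b w * area u d e + area a b e * area d u w = 0.
Proof. by rewrite /area; ring. Qed.

Definition comb t x y : R * R :=
  (t * x.1 + (1 - t) * y.1, t * x.2 + (1 - t) * y.2).

Lemma comb0 x y : comb 0 x y = y.
Proof. by rewrite /comb !mul0r !subr0 !mul1r !add0r -surjective_pairing. Qed.

Lemma comb1 x y : comb 1 x y = x.
Proof. by rewrite /comb !mul1r subrr !mul0r !addr0 -surjective_pairing. Qed.

Lemma comb_comb (r : R) s t x y :
  comb r (comb t x y) (comb s x y) = comb (r * t + (1 - r) * s) x y.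
Proof. by rewrite /comb /=; congr (_, _); ring. Qed.

Lemma area_comb a b x y t :
  area a b (comb t x y) = t * area a b x + (1 - t) * area a b y.
Proof. by rewrite /area /comb /=; ring. Qed.

Lemma area_comb_line a b x s t :
  area x (comb s b a) (comb t b a) = (t - s) * area a b x.
Proof. by rewrite /area /comb /=; ring. Qed.

Lemma area_comb_apex x P Q s t :
  area x (comb s P x) (comb t Q x) = s * t * area x P Q.
Proof. by rewrite /area /comb /=; ring. Qed.

Lemma is_interval_line {K} x y :
  convex_set2 K -> is_interval [set s | K (comb s x y)].
Proof.
move=> cK s t Ks Kt r /andP[sr rt]; have [st|] := ltP s t; last first.
  by move=> ts; have -> : r = s by lra.
have st0 : t - s != 0 by rewrite subr_eq0 gt_eqF.
have -> : r = (r - s) / (t - s) * t + (1 - (r - s) / (t - s)) * s.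
  by field.
rewrite /= -comb_comb; apply: cK => //.
  by apply: divr_ge0; lra.
by rewrite ler_pdivrMr ?mul1r; lra.
Qed.

Lemma segment_meets_line {a b x P} :
  area a b x * area a b P < 0 ->
  exists2 t, 0 < t <= 1 & area a b (comb t P x) = 0.
Proof.
move: (area a b x) (area a b P) (area_comb a b P x) => hx hP hcomb hxP.
have hd : hx - hP != 0 by rewrite subr_eq0; apply: contraTneq hxP => ->; nra.
exists (hx / (hx - hP)); last by rewrite hcomb; field.
have [hx_pos|hx_neg] := ltP 0 hx.
  have hd_pos : 0 < hx - hP by nra.
  by rewrite divr_gt0 //= ler_pdivrMr ?mul1r; nra.
have hd_neg : hx - hP < 0 by nra.
by rewrite -divrNN divr_gt0 /= ?ler_pdivrMr ?mul1r; nra.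
Qed.

Lemma sqr_dist_gt0 {y z} : y != z -> 0 < (z.1 - y.1) ^+ 2 + (z.2 - y.2) ^+ 2.
Proof.
move=> yz; rewrite lt_neqAle addr_ge0 ?sqr_ge0 // andbT eq_sym.
rewrite paddr_eq0 ?sqr_ge0 // !sqrf_eq0 !subr_eq0.
apply: contra yz => /andP[/eqP e1 /eqP e2].
by rewrite [y]surjective_pairing [z]surjective_pairing e1 e2.
Qed.

Lemma collinear_comb {x y z} :
  y != z -> area y z x = 0 -> exists s, x = comb s z y.
Proof.
move=> yz hx; have N0 := sqr_dist_gt0 yz.
set N := _ + _ in N0; have Nn0 : N != 0 by rewrite gt_eqF.
exists (((z.1 - y.1) * (x.1 - y.1) + (z.2 - y.2) * (x.2 - y.2)) / N).
rewrite [LHS]surjective_pairing /comb; congr (_, _); apply: (mulfI Nn0).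
- have -> : N * x.1 = N * y.1 + (z.1 - y.1) * ((z.1 - y.1) * (x.1 - y.1)
      + (z.2 - y.2) * (x.2 - y.2)) - (z.2 - y.2) * area y z x.
    by rewrite /N /area; ring.
  by rewrite hx /N; field.
- have -> : N * x.2 = N * y.2 + (z.2 - y.2) * ((z.1 - y.1) * (x.1 - y.1)
      + (z.2 - y.2) * (x.2 - y.2)) + (z.1 - y.1) * area y z x.
    by rewrite /N /area; ring.
  by rewrite hx /N; field.
Qed.

Lemma interval_helly {I J L : set R} {r s t : R} :
  is_interval I -> is_interval J -> is_interval L ->
  J r -> L r -> I s -> L s -> I t -> J t -> exists m, I m /\ J m /\ L m.
Proof.
move=> iI iJ iL Jr Lr Is Ls It Jt.
have btw (E : set R) (x y z : R) :
    is_interval E -> E x -> E y -> (x <= z <= y) || (y <= z <= x) -> E z.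
  by move=> iE Ex Ey /orP[]; [exact: (iE x y) | exact: (iE y x)].
have : [|| (s <= r <= t) || (t <= r <= s), (r <= s <= t) || (t <= s <= r)
         | (r <= t <= s) || (s <= t <= r)] by lra.
case/or3P => [hr|hs|ht].
- by exists r; split; [exact: btw Is It hr|].
- by exists s; split; [|split; [exact: btw Jr Jt hs|]].
- by exists t; split; [|split; [|exact: btw Lr Ls ht]].
Qed.

Lemma interval_overlap_meet {I0 Ii Ij : set R} {si sj : R} :
  is_interval I0 -> is_interval Ii -> is_interval Ij ->
  I0 0 -> I0 1 -> Ii 0 -> Ii si -> Ij sj -> Ij 1 -> sj <= si ->
  exists m, I0 m /\ Ii m /\ Ij m.
Proof.
move=> i0 ii ij I00 I01 Ii0 Iis Ijs Ij1 sji.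
have [si_neg|si_ge0] := ltP si 0.
  by exists 0; split; [|split; [|apply: ij Ijs Ij1 _ _; lra]].
have [si_gt1|si_le1] := ltP 1 si.
  by exists 1; split; [|split; [apply: ii Ii0 Iis _ _; lra|]].
exists si; split; first by apply: i0 I00 I01 _ _; lra.
by split; [|apply: ij Ijs Ij1 _ _; lra].
Qed.

Lemma convex_collinear_meet {A B C x y z} :
  convex_set2 A -> convex_set2 B -> convex_set2 C ->
  (B `&` C) x -> (A `&` C) y -> (A `&` B) z -> area y z x = 0 ->
  (A `&` B `&` C) !=set0.
Proof.
move=> cA cB cC [Bx Cx] [Ay Cy] [Az Bz] hx.
have [yz|yz] := eqVneq y z; first by exists y; rewrite yz in Ay Cy *.
have [s xE] := collinear_comb yz hx; rewrite {}xE in Bx Cx.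
rewrite -(comb0 z y) in Ay Cy; rewrite -(comb1 z y) in Az Bz.
have [m [Am [Bm Cm]]] := interval_helly (is_interval_line z y cA)
  (is_interval_line z y cB) (is_interval_line z y cC) Bx Cx Ay Cy Az Bz.
by exists (comb m z y).
Qed.

Lemma set_orient0_meet {A B C} :
  convex_set2 A -> convex_set2 B -> convex_set2 C ->
  (B `&` C) !=set0 -> (A `&` C) !=set0 -> (A `&` B) !=set0 ->
  set_orient_is A B C 0 -> (A `&` B `&` C) !=set0.
Proof.
move=> cA cB cC [x hx] [y hy] [z hz] [[//]|[_ ho]].
have /eqP := ho x y z hx hy hz; rewrite orientE sgr_eq0 area_rotate => /eqP xyz.
exact: convex_collinear_meet hx hy hz xyz.
Qed.

Lemma set_orient_nz {A B C s} : s != 0 -> set_orient_is A B C s ->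
  A `&` B `&` C = set0 /\
  forall x y z, (B `&` C) x -> (A `&` C) y -> (A `&` B) z -> orient x y z = s.
Proof. by move=> s0 [[_ s0E]|//]; rewrite s0E eqxx in s0. Qed.

Lemma set_orient_height {K0 Ki Kj s a b x} :
  s != 0 -> set_orient_is K0 Ki Kj s ->
  (K0 `&` Ki) a -> (K0 `&` Kj) b -> (Ki `&` Kj) x -> Num.sg (area a b x) = - s.
Proof.
move=> s0 /(set_orient_nz s0)[_ ho] ha hb hx.
by rewrite -(ho x b a hx hb ha) orient_height opprK.
Qed.

Lemma crossing_orient {K0 Ki Kj a b x P Q} :
  convex_set2 K0 -> convex_set2 Ki -> convex_set2 Kj ->
  (K0 `&` Ki) a -> (K0 `&` Kj) b -> (Ki `&` Kj) x -> Ki P -> Kj Q -> a != b ->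
  area a b x * area a b P < 0 -> area a b x * area a b Q < 0 ->
  K0 `&` Ki `&` Kj = set0 -> 0 < area a b x * area x P Q.
Proof.
move=> c0 ci cj [K0a Kia] [K0b Kjb] [Kix Kjx] KiP KjQ ab hP hQ disj.
have [tP /andP[tP0 tP1] onP] := segment_meets_line hP.
have [tQ /andP[tQ0 tQ1] onQ] := segment_meets_line hQ.
have [sP eP] := collinear_comb ab onP.
have [sQ eQ] := collinear_comb ab onQ.
have KiP' : Ki (comb sP b a) by rewrite -eP; exact: (ci _ _ KiP Kix _ (ltW tP0) tP1).
have KjQ' : Kj (comb sQ b a) by rewrite -eQ; exact: (cj _ _ KjQ Kjx _ (ltW tQ0) tQ1).
have sPQ : sP < sQ.
  rewrite ltNge; apply/negP => hle.
  rewrite -(comb0 b a) in K0a Kia; rewrite -(comb1 b a) in K0b Kjb.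
  have [m [K0m [Kim Kjm]]] := interval_overlap_meet (is_interval_line b a c0)
    (is_interval_line b a ci) (is_interval_line b a cj) K0a K0b Kia KiP' KjQ' Kjb hle.
  have : (K0 `&` Ki `&` Kj) (comb m b a) by [].
  by rewrite disj.
have := area_comb_line a b x sP sQ; rewrite -eP -eQ area_comb_apex => e.
have h0 : area a b x != 0 by apply: contraTneq hP => ->; rewrite mul0r ltxx.
have : 0 < tP * tQ * (area a b x * area x P Q).
  by rewrite mulrCA e mulrCA -expr2 mulr_gt0 ?subr_gt0 ?exprn_even_gt0 ?h0.
by rewrite pmulr_rgt0 // mulr_gt0.
Qed.

Lemma heights_contra {a b d u w e} :
  area a b d < 0 -> area a b e < 0 -> 0 < area a b u -> 0 < area a b w ->
  0 < area a b d * area d u w -> 0 < area a b u * area u d e ->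
  0 < area a b w * area w e d -> 0 < area a b e * area e w u -> False.
Proof.
have := area_height_relation a b d u w e.
move: (area a b d) (area a b u) (area a b w) (area a b e) => hd hu hw he.
move: (area d u w) (area u d e) (area w e d) (area e w u) => duw ude wed ewu.
move=> rel hd0 he0 hu0 hw0 pd pu pw pe.
have duw0 : duw < 0 by rewrite -(nmulr_rgt0 _ hd0).
have ude0 : 0 < ude by rewrite -(pmulr_rgt0 _ hu0).
have wed0 : 0 < wed by rewrite -(pmulr_rgt0 _ hw0).
have ewu0 : ewu < 0 by rewrite -(nmulr_rgt0 _ he0).
nra.
Qed.

Lemma plus_pattern_unrealizable {K0 K1 K2 K3 K4 a b} :
  convex_set2 K0 -> convex_set2 K1 -> convex_set2 K2 -> convex_set2 K3 ->
  convex_set2 K4 -> (K0 `&` K1 `&` K2) a -> (K0 `&` K3 `&` K4) b ->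
  (K1 `&` K3) !=set0 -> (K1 `&` K4) !=set0 ->
  (K2 `&` K3) !=set0 -> (K2 `&` K4) !=set0 ->
  set_orient_is K0 K1 K3 1 -> set_orient_is K0 K1 K4 (-1) ->
  set_orient_is K0 K2 K3 (-1) -> set_orient_is K0 K2 K4 1 -> False.
Proof.
move=> c0 c1 c2 c3 c4 [[a0 a1] a2] [[b0 b3] b4] [d hd] [u hu] [w hw] [e he].
move=> o13 o14 o23 o24; have n1 : (1 : R) != 0 := oner_neq0 R.
have nN1 : (-1 : R) != 0 by rewrite oppr_eq0.
have /eqP := set_orient_height n1 o13 (conj a0 a1) (conj b0 b3) hd.
rewrite sgr_cp0 => sd.
have /eqP := set_orient_height nN1 o14 (conj a0 a1) (conj b0 b4) hu.
rewrite opprK sgr_cp0 => su.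
have /eqP := set_orient_height nN1 o23 (conj a0 a2) (conj b0 b3) hw.
rewrite opprK sgr_cp0 => sw.
have /eqP := set_orient_height n1 o24 (conj a0 a2) (conj b0 b4) he.
rewrite sgr_cp0 => se.
have ab : a != b by apply: contraTneq sd => ->; rewrite /area !subrr !mul0r subrr ltxx.
apply: (heights_contra sd se su sw).
- apply: crossing_orient c0 c1 c3 (conj a0 a1) (conj b0 b3) hd hu.1 hw.2 ab _ _
    (set_orient_nz n1 o13).1; nra.
- apply: crossing_orient c0 c1 c4 (conj a0 a1) (conj b0 b4) hu hd.1 he.2 ab _ _
    (set_orient_nz nN1 o14).1; nra.
- apply: crossing_orient c0 c2 c3 (conj a0 a2) (conj b0 b3) hw he.1 hd.2 ab _ _
    (set_orient_nz nN1 o23).1; nra.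
- apply: crossing_orient c0 c2 c4 (conj a0 a2) (conj b0 b4) he hw.1 hu.2 ab _ _
    (set_orient_nz n1 o24).1; nra.
Qed.

End Plane.

Theorem theorem2 (R : realType) :
  exists p : 'I_5 -> R * R, injective p /\
    ~ exists K : 'I_5 -> set (R * R),
        (forall i, compact (K i) /\ convex_set2 (K i)) /\
        (forall i j, (K i `&` K j) !=set0) /\
        (forall i j k : 'I_5, i != j -> j != k -> i != k ->
           set_orient_is (K i) (K j) (K k) (orient (p i) (p j) (p k))).
Proof.
pose p (i : 'I_5) : R * R :=
  nth (0, 0) [:: (0, 0); (1, 0); (-1, 0); (0, 1); (0, -1)] i.
exists p; split.
  move=> [[|[|[|[|[|?]]]]] ?] [[|[|[|[|[|?]]]]] ?] //= e; apply: val_inj => //=;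
    by exfalso; case: e => *; lra.
move=> [K [cK [meet ori]]].
pose i0 : 'I_5 := @Ordinal 5 0 isT; pose i1 : 'I_5 := @Ordinal 5 1 isT.
pose i2 : 'I_5 := @Ordinal 5 2 isT; pose i3 : 'I_5 := @Ordinal 5 3 isT.
pose i4 : 'I_5 := @Ordinal 5 4 isT.
have c i := (cK i).2.
have ori_at i j k s : i != j -> j != k -> i != k ->
    orient (p i) (p j) (p k) = s -> set_orient_is (K i) (K j) (K k) s.
  by move=> ij jk ik <-; exact: ori.
have [o012 [o034 [o013 [o014 [o023 o024]]]]] :
  set_orient_is (K i0) (K i1) (K i2) 0 /\ set_orient_is (K i0) (K i3) (K i4) 0 /\
  set_orient_is (K i0) (K i1) (K i3) 1 /\ set_orient_is (K i0) (K i1) (K i4) (-1) /\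
  set_orient_is (K i0) (K i2) (K i3) (-1) /\ set_orient_is (K i0) (K i2) (K i4) 1.
  by do !split; apply: ori_at; rewrite // orientE /area /=
    !(subr0, subrr, mulr0, mul0r, mulr1, mul1r, mulrNN) ?sgr0 ?sgr1 ?sgrN1.
have [a Ka] := set_orient0_meet (c i0) (c i1) (c i2) (meet i1 i2) (meet i0 i2)
  (meet i0 i1) o012.
have [b Kb] := set_orient0_meet (c i0) (c i3) (c i4) (meet i3 i4) (meet i0 i4)
  (meet i0 i3) o034.
exact: (plus_pattern_unrealizable (c i0) (c i1) (c i2) (c i3) (c i4) Ka Kb
  (meet i1 i3) (meet i1 i4) (meet i2 i3) (meet i2 i4) o013 o014 o023 o024).
Qed.
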